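(* Let $a<b$ and let $f,g:[a,b]\to\mathbb{R}$ be differentiable on $[a,b]$ (one-sided derivatives at the endpoints), and suppose $f$ and $g$ are twice differentiable at the point $a$ (from the right). Suppose $g(a)\neq g(b)$ and put $K=\frac{f(b)-f(a)}{g(b)-g(a)}$. If $$\bigl[f'(a)-K\,g'(a)\bigr]\cdot\bigl[f''(a)-K\,g''(a)\bigr]> 0,$$ then there exists $\xi\in(a,b)$ such that $$f'(a)-\frac{f(\xi)-f(a)}{\xi-a}=K\left[g'(a)-\frac{g(\xi)-g(a)}{\xi-a}\right].$$
   Context: Differentiability on a closed interval $[a,b]$ means differentiability on $(a,b)$ together with existence of the one-sided derivatives at $a$ and $b$. *)

From Stdlib Require Import Reals.
From Coquelicot Require Import Coquelicot.
Open Scope R_scope.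

Definition has_right_deriv (f : R -> R) (x l : R) : Prop :=
  filterlim (fun y => (f y - f x) / (y - x)) (at_right x) (locally l).

Definition has_left_deriv (f : R -> R) (x l : R) : Prop :=
  filterlim (fun y => (f y - f x) / (y - x)) (at_left x) (locally l).

Definition deriv_on_closed (f f' : R -> R) (a b : R) : Prop :=
  (forall x, a < x < b -> is_derive f x (f' x)) /\
  has_right_deriv f a (f' a) /\ has_left_deriv f b (f' b).

From Stdlib Require Import Reals Lra Ranalysis5.
From Coquelicot Require Import Coquelicot.
Open Scope R_scope.

(* Put h := f - K g, so that h a = h b, and A := h'(a); the claim is that the
   chord slope (h ξ - h a) / (ξ - a) takes the value A.  Let ψ x := A h x - A² x.
   The sign hypothesis says A h''(a) > 0, hence A (h' x - A) > 0 just right of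
   a: ψ is strictly increasing there and, being right-continuous at a, exceeds
   ψ a at some t in (a, b).  Since ψ b - ψ a = - A² (b - a) < 0 and ψ is
   left-continuous at b, ψ drops below ψ a again before b, and the intermediate
   value theorem gives ξ with ψ ξ = ψ a, i.e. the required chord slope. *)

Lemma filterlim_lincomb {T : Type} {F : (T -> Prop) -> Prop} {FF : Filter F}
    (u v : T -> R) (lu lv c d : R) :
  filterlim u F (locally lu) -> filterlim v F (locally lv) ->
  filterlim (fun t => c * u t + d * v t) F (locally (c * lu + d * lv)).
Proof.
intros Hu Hv.
eapply filterlim_comp_2; [| | apply (filterlim_plus (c * lu) (d * lv))].
- eapply filterlim_comp; [exact Hu | exact (filterlim_scal_r c lu)].
- eapply filterlim_comp; [exact Hv | exact (filterlim_scal_r d lv)].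
Qed.

Lemma filterlim_Rmult {T : Type} {F : (T -> Prop) -> Prop} {FF : Filter F}
    (u v : T -> R) (lu lv : R) :
  filterlim u F (locally lu) -> filterlim v F (locally lv) ->
  filterlim (fun t => u t * v t) F (locally (lu * lv)).
Proof.
intros Hu Hv.
exact (filterlim_comp_2 _ _ _ Hu Hv (filterlim_mult lu lv)).
Qed.

Lemma diff_quot_lincomb (f g : R -> R) (c d x y : R) :
  (c * f y + d * g y - (c * f x + d * g x)) / (y - x)
  = c * ((f y - f x) / (y - x)) + d * ((g y - g x) / (y - x)).
Proof. unfold Rdiv; ring. Qed.

Lemma filterlim_diff_quot_lincomb (F : (R -> Prop) -> Prop) {FF : Filter F}
    (f g : R -> R) (x lf lg c d : R) :
  filterlim (fun y => (f y - f x) / (y - x)) F (locally lf) ->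
  filterlim (fun y => (g y - g x) / (y - x)) F (locally lg) ->
  filterlim (fun y => (c * f y + d * g y - (c * f x + d * g x)) / (y - x)) F
    (locally (c * lf + d * lg)).
Proof.
intros Hf Hg.
eapply filterlim_ext; [intro y; symmetry; apply diff_quot_lincomb|].
exact (filterlim_lincomb _ _ _ _ c d Hf Hg).
Qed.

Lemma has_right_deriv_lincomb (f g : R -> R) (x lf lg c d : R) :
  has_right_deriv f x lf -> has_right_deriv g x lg ->
  has_right_deriv (fun y => c * f y + d * g y) x (c * lf + d * lg).
Proof. apply filterlim_diff_quot_lincomb, within_filter, locally_filter. Qed.

Lemma deriv_on_closed_lincomb (f g f' g' : R -> R) (a b c d : R) :
  deriv_on_closed f f' a b -> deriv_on_closed g g' a b ->
  deriv_on_closed (fun x => c * f x + d * g x) (fun x => c * f' x + d * g' x) a b.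
Proof.
intros [Fi [Fa Fb]] [Gi [Ga Gb]]; split; [|split].
- intros x Hx.
  exact (is_derive_plus (fun y => c * f y) (fun y => d * g y) x _ _
           (is_derive_scal f x c _ (Fi x Hx)) (is_derive_scal g x d _ (Gi x Hx))).
- exact (has_right_deriv_lincomb _ _ _ _ _ _ _ Fa Ga).
- exact (filterlim_diff_quot_lincomb _ _ _ _ _ _ _ _ Fb Gb).
Qed.

(* Off [x], [f y = f x + (f y - f x) / (y - x) * (y - x)], and the last factor
   tends to [0]. *)
Lemma diff_quot_lim_continuous (D : R -> Prop) (f : R -> R) (x l : R) :
  (forall y, D y -> y <> x) ->
  filterlim (fun y => (f y - f x) / (y - x)) (within D (locally x)) (locally l) ->
  filterlim f (within D (locally x)) (locally (f x)).
Proof.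
intros HD Hq.
assert (Hid : filterlim (fun y : R => y) (within D (locally x)) (locally x)).
{ apply filter_le_within. }
pose proof (filterlim_lincomb _ _ _ _ 1 (-1)
  Hid (filterlim_const (F := within D (locally x)) x)) as Hgap.
pose proof (filterlim_Rmult _ _ _ _ Hq Hgap) as Hprod.
pose proof (filterlim_lincomb _ _ _ _ 1 1
  (filterlim_const (F := within D (locally x)) (f x)) Hprod) as Hsum.
replace (1 * f x + 1 * (l * (1 * x + -1 * x))) with (f x) in Hsum by ring.
apply filterlim_within_ext with (2 := Hsum).
intros y Hy; pose proof (HD y Hy); field; lra.
Qed.

Lemma has_right_deriv_continuous (f : R -> R) (x l : R) :
  has_right_deriv f x l -> filterlim f (at_right x) (locally (f x)).
Proof. apply diff_quot_lim_continuous; intros y Hy; lra. Qed.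

Lemma has_left_deriv_continuous (f : R -> R) (x l : R) :
  has_left_deriv f x l -> filterlim f (at_left x) (locally (f x)).
Proof. apply diff_quot_lim_continuous; intros y Hy; lra. Qed.

Lemma at_right_interval (P : R -> Prop) (a : R) :
  at_right a P -> exists c, a < c /\ forall y, a < y < c -> P y.
Proof.
intros [e He]; exists (a + e); split.
- pose proof (cond_pos e); lra.
- intros y Hy; apply He; [|lra].
  unfold ball; simpl; unfold AbsRing_ball, abs, minus, plus, opp; simpl.
  rewrite Rabs_right; lra.
Qed.

Lemma incr_right_continuous_lt (u : R -> R) (a c t : R) :
  (forall s s', a < s -> s < s' -> s' < c -> u s < u s') ->
  filterlim u (at_right a) (locally (u a)) ->
  a < t < c -> u a < u t.
Proof.
intros Hincr Hu Ht.
set (t' := (a + t) / 2).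
assert (Hgap : u t' < u t) by (apply Hincr; unfold t'; lra).
assert (Hnear : at_right a (fun s => a < s /\ u a - (u t - u t') < u s /\ s < t')).
{ repeat apply filter_and.
  - unfold at_right, within; apply filter_forall; auto.
  - apply (Hu (fun z => u a - (u t - u t') < z)), open_gt; lra.
  - apply filter_le_within, open_lt; unfold t'; lra. }
destruct (filter_ex _ Hnear) as [s [Has [Hs Hst]]].
assert (u s < u t') by (apply Hincr; unfold t' in *; lra).
lra.
Qed.

Lemma IVT_open_interval (u : R -> R) (a b t y v : R) :
  (forall x, a < x < b -> continuity_pt u x) ->
  a < t -> t < y -> y < b -> u y < v < u t ->
  exists xi, a < xi < b /\ u xi = v.
Proof.
intros Cu Hat Hty Hyb Hv.
destruct (IVT_interv (fun x => v - u x) t y) as [xi [Hxi Hroot]];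
  [ intros z Hz; apply continuity_pt_minus;
    [ apply continuity_pt_const; intros p q; reflexivity | apply Cu; lra ]
  | lra | simpl; lra | simpl; lra | ].
exists xi; split; [lra | simpl in Hroot; lra].
Qed.

Lemma chord_slope_attains (h h' : R -> R) (a b A : R) :
  a < b -> A <> 0 -> h a = h b ->
  (forall x, a < x < b -> is_derive h x (h' x)) ->
  filterlim h (at_right a) (locally (h a)) ->
  filterlim h (at_left b) (locally (h b)) ->
  at_right a (fun y => 0 < A * (h' y - A)) ->
  exists xi, a < xi < b /\ (h xi - h a) / (xi - a) = A.
Proof.
intros Hab HA Hhab Dh Ca Cb Hnear_a.
set (psi := fun x => A * h x + - (A * A) * x).
assert (Dpsi : forall x, a < x < b -> is_derive psi x (A * h' x + - (A * A) * 1)).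
{ intros x Hx.
  exact (is_derive_plus _ _ x _ _ (is_derive_scal h x A _ (Dh x Hx))
           (is_derive_scal (fun y => y) x _ _ (is_derive_id x))). }
assert (Cpsi : forall x, a < x < b -> continuity_pt psi x).
{ intros x Hx; apply continuity_pt_filterlim.
  exact (ex_derive_continuous psi x (ex_intro _ _ (Dpsi x Hx))). }
destruct (at_right_interval _ a (filter_and _ _ Hnear_a
            (filter_le_within _ _ (open_lt b a Hab)))) as [c [Hac Hc]].
set (t := (a + Rmin c b) / 2).
pose proof (Rmin_l c b); pose proof (Rmin_r c b).
assert (Ht : a < t < Rmin c b) by (pose proof (Rmin_glb_lt c b a Hac Hab); unfold t; lra).
assert (Hrise : psi a < psi t).
{ apply (incr_right_continuous_lt psi a (Rmin c b)); [| |exact Ht].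
  - intros s s' Hs Hss' Hs'.
    apply (incr_function psi a (Rmin c b) (fun x => A * h' x + - (A * A) * 1)); auto.
    + intros x Hxa Hxc; apply Dpsi; simpl in *; lra.
    + intros x Hxa Hxc; simpl in *; destruct (Hc x) as [Hpos _]; lra.
  - exact (filterlim_lincomb _ _ _ _ A (- (A * A)) Ca (filter_le_within _)). }
assert (Hfall : psi b < psi a).
{ pose proof (Rsqr_pos_lt A HA); unfold Rsqr in *; unfold psi; rewrite <- Hhab; nra. }
assert (Hnear : at_left b (fun y => y < b /\ psi y < psi a /\ t < y)).
{ repeat apply filter_and.
  - unfold at_left, within; apply filter_forall; auto.
  - apply (filterlim_lincomb _ _ _ _ A (- (A * A)) Cb (filter_le_within _)
             (fun z => z < psi a)), open_lt; exact Hfall.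
  - apply filter_le_within, open_gt; lra. }
destruct (filter_ex _ Hnear) as [y [Hyb [Hy Hty]]].
destruct (IVT_open_interval psi a b t y (psi a)) as [xi [Hxi Hroot]]; [auto; lra ..|].
exists xi; split; [exact Hxi|].
assert (Hchord : h xi - h a = A * (xi - a)).
{ apply (Rmult_eq_reg_l A); [|exact HA]. unfold psi in Hroot; nra. }
rewrite Hchord; field; lra.
Qed.

Lemma chord_slope_eq_right_deriv (h h' : R -> R) (a b B : R) :
  a < b -> h a = h b -> deriv_on_closed h h' a b -> has_right_deriv h' a B ->
  0 < h' a * B ->
  exists xi, a < xi < b /\ (h xi - h a) / (xi - a) = h' a.
Proof.
intros Hab Hhab [Di [Da Db]] D2 Hsign.
apply (chord_slope_attains h h' a b (h' a)); auto.
- intro H0; rewrite H0 in Hsign; lra.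
- exact (has_right_deriv_continuous _ _ _ Da).
- exact (has_left_deriv_continuous _ _ _ Db).
- assert (Hlim := filterlim_Rmult _ _ _ _
                    (filterlim_const (F := at_right a) (h' a)) D2).
  assert (Hnear : at_right a (fun y => a < y /\ 0 < h' a * ((h' y - h' a) / (y - a)))).
  { apply filter_and.
    - unfold at_right, within; apply filter_forall; auto.
    - apply (Hlim (fun z => 0 < z)), open_gt; exact Hsign. }
  refine (filter_imp _ _ _ Hnear); intros y [Hy Hpos].
  replace (h' a * (h' y - h' a)) with (h' a * ((h' y - h' a) / (y - a)) * (y - a))
    by (field; lra).
  apply Rmult_lt_0_compat; lra.
Qed.

Theorem mainTheorem3 (a b : R) (f g f' g' : R -> R) (f2 g2 : R) :
  a < b ->
  deriv_on_closed f f' a b ->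
  deriv_on_closed g g' a b ->
  has_right_deriv f' a f2 ->
  has_right_deriv g' a g2 ->
  g a <> g b ->
  let K := (f b - f a) / (g b - g a) in
  (f' a - K * g' a) * (f2 - K * g2) > 0 ->
  exists xi, a < xi < b /\
    f' a - (f xi - f a) / (xi - a) = K * (g' a - (g xi - g a) / (xi - a)).
Proof.
intros Hab Df Dg D2f D2g Hgab K Hsign.
set (h := fun x => 1 * f x + - K * g x).
assert (Hhab : h a = h b).
{ unfold h, K; field; intro E; apply Hgab; lra. }
destruct (chord_slope_eq_right_deriv h (fun x => 1 * f' x + - K * g' x) a b
            (1 * f2 + - K * g2) Hab Hhab (deriv_on_closed_lincomb _ _ _ _ _ _ _ _ Df Dg)
            (has_right_deriv_lincomb _ _ _ _ _ _ _ D2f D2g))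
  as [xi [Hxi Hslope]]; [nra|].
exists xi; split; [exact Hxi|].
unfold h in Hslope; rewrite diff_quot_lincomb in Hslope; lra.
Qed.
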